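(* Let $I$ be a $Q$-interval of $\mathcal{P}$ with $D(I)=\{x_1,x_2,\ldots,x_r\}$, listed in the order of the children of the corresponding $Q$-node (so $\max Int(x_i)+1=\min Int(x_{i+1})$). Then $I$ is a $b$-nested common interval if and only if either $Int(x_1)$ is $b$-small and $I\setminus Int(x_1)$ is a $b$-nested common interval, or $Int(x_r)$ is $b$-small and $I\setminus Int(x_r)$ is a $b$-nested common interval.
   Context: Let $n\geq 1$, $K\geq 1$ and let $\mathcal{P}=\{P_1,\ldots,P_K\}$ be permutations of $\{1,\ldots,n\}$ with $P_1=(1,2,\ldots,n)$. For integers $i\leq j$ write $(i..j)=\{i,\ldots,j\}$. A common interval of $\mathcal{P}$ is a set of integers occupying consecutive positions in every $P_k$; all have the form $(i..j)$, and singletons and $(1..n)$ are common. Fix a positive integer $b$. A common interval $I$ is $b$-small if $|I|\leq b$, $b$-large otherwise; it is $b$-nested if $|I|=1$ or $I$ strictly contains a $b$-nested common interval $J$ with $|J|\geq|I|-b$ (recursive on size). Two intervals $(i..j)$, $(k..l)$ overlap if $i<k\leq j<l$ or $k<i\leq l<j$. A common interval is strong if it overlaps no other common interval. The PQ-tree $T$: nodes are the strong common intervals ($Int(x)$ is the interval of node $x$), root $(1..n)$, leaves the singletons, parent of $y$ is the node whose interval is the smallest strong common interval strictly containing $Int(y)$. A node $x$ with children set $D$ is a $P$-node if no union $\bigcup_{z\in D'}Int(z)$, $D'\subset D$, $2\leq|D'|<|D|$, is common; otherwise it is a $Q$-node with children ordered $y_1,\ldots,y_r$ so that $\max Int(y_i)+1=\min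 Int(y_{i+1})$. It is known that a set is a common interval iff it is $Int(x)$ for a node $x$ or the union of the intervals of consecutive children of a unique $Q$-node. The domain $D(I)$ of a common interval $I$ is the set of children of $x$ if $I=Int(x)$ is strong, and otherwise the set of consecutive children of the $Q$-node whose intervals have union $I$. A $P$-interval is a strong common interval $Int(x)$ with $x$ a $P$-node; all other common intervals are $Q$-intervals. *)

(* Elements and positions are 0-based: {1..n} is modelled by 'I_n. *)
From mathcomp Require Import all_boot all_fingroup.
Set Implicit Arguments. Unset Strict Implicit. Unset Printing Implicit Defensive.

Section CommonIntervals.
Variables (n K : nat) (P : 'I_K -> {perm 'I_n}).
(* P k maps a position to the element at that position; the position of
   element x in P k is (P k)^-1 x. *)

Definition itv (i j : nat) : {set 'I_n} := [set x : 'I_n | i <= x <= j].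

Definition consec (s : {perm 'I_n}) (S : {set 'I_n}) : bool :=
  (S != set0) &&
  [forall x in S, forall y in S, forall z : 'I_n,
     (((s^-1)%g x <= (s^-1)%g z) && ((s^-1)%g z <= (s^-1)%g y))%N ==> (z \in S)].

Definition common (S : {set 'I_n}) : bool := [forall k, consec (P k) S].

Definition overlap (S T : {set 'I_n}) : bool :=
  [exists i : 'I_n, exists j : 'I_n, exists k : 'I_n, exists l : 'I_n,
     (S == itv i j) && (T == itv k l) &&
     (((i < k) && (k <= j) && (j < l)) || ((k < i) && (i <= l) && (l < j)))%N].

Definition strong (S : {set 'I_n}) : bool :=
  common S && [forall T, common T ==> ~~ overlap S T].

(* Y is a child of X in the PQ-tree: X is the smallest strong common
   interval strictly containing Y *)
Definition is_child (X Y : {set 'I_n}) : bool :=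
  strong X && strong Y && (Y \proper X) &&
  [forall Z, (strong Z && (Y \proper Z)) ==> (X \subset Z)].

Definition children (X : {set 'I_n}) : {set {set 'I_n}} := [set Y | is_child X Y].

Definition some_union_common (X : {set 'I_n}) : bool :=
  [exists D' : {set {set 'I_n}},
     [&& D' \subset children X, 2 <= #|D'|, #|D'| < #|children X| &
         common (\bigcup_(Y in D') Y)]].

Definition Pnode (X : {set 'I_n}) : bool := strong X && ~~ some_union_common X.
Definition Qnode (X : {set 'I_n}) : bool := strong X && some_union_common X.

Definition Pinterval (I : {set 'I_n}) : bool := Pnode I.
Definition Qinterval (I : {set 'I_n}) : bool := common I && ~~ Pinterval I.

Definition adj (Y Z : {set 'I_n}) : bool :=
  [exists y in Y, exists z in Z,
     [&& (val y).+1 == val z, [forall y' in Y, y' <= y] & [forall z' in Z, z <= z']]].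

Definition is_domain (I : {set 'I_n}) (D : {set {set 'I_n}}) : Prop :=
  (strong I /\ D = children I) \/
  (~~ strong I /\ exists X, Qnode X /\
     exists cs : seq {set 'I_n},
       sorted adj cs /\ perm_eq cs (enum (children X)) /\
       exists a m : nat, D = [set Y in take m (drop a cs)] /\
                         \bigcup_(Y in D) Y = I).

Definition small (b : nat) (I : {set 'I_n}) : bool := #|I| <= b.

(* b-nested common intervals (least fixed point = recursion on size) *)
Inductive nested (b : nat) : {set 'I_n} -> Prop :=
| nested1 I : common I -> #|I| = 1 -> nested b I
| nestedS I J : common I -> common J -> J \proper I -> #|I| <= #|J| + b ->
                nested b J -> nested b I.

End CommonIntervals.

(* Every run of consecutive children of a Q-node is a common interval.  This is an argument on
   intervals of positions: the family of common runs contains the single children and the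
   whole node, is closed under intersection, differences and union of overlapping members,
   and each proper common run with two or more children is overlapped by another common run
   (otherwise it would be strong); as the node is a Q-node, such runs exist.  A shortest
   common run containing two neighbouring children i and i+1 can then only be split into two
   common runs between i and i+1, which forces it to be exactly the pair; unions of
   overlapping pairs give all runs.

   So I, I \ Int(x_1) and I \ Int(x_r) are common.  If I is b-nested through J, with
   |I| <= |J| + b, then J misses one of the end children, which is therefore b-small, and
   I minus it is b-nested.  Conversely, adding a b-small end child to a b-nested
   common interval keeps it b-nested. *)

From mathcomp Require Import all_boot all_fingroup.
From mathcomp Require Import zify.
Set Implicit Arguments. Unset Strict Implicit. Unset Printing Implicit Defensive.

(* [F i j] abstracts "the union of the children i..j of a Q-node is common". *)
Section IntervalFamily.
Variables (r : nat) (F : nat -> nat -> bool).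
Hypothesis F_single : forall i, i < r -> F i i.
Hypothesis F_full : F 0 r.-1.
Hypothesis F_overlap : forall i j k l, i < k -> k <= j -> j < l -> l < r ->
  F i j -> F k l -> [/\ F k j, F i k.-1, F j.+1 l & F i l].
Hypothesis F_overlapped : forall i j, i < j -> j < r -> ~ (i = 0 /\ j = r.-1) ->
  F i j -> exists k l, [/\ k <= l, l < r, F k l &
     ((i < k /\ k <= j /\ j < l) \/ (k < i /\ i <= l /\ l < j))].
Hypothesis F_proper : exists i j, [/\ i < j, j < r, ~ (i = 0 /\ j = r.-1) & F i j].

(* Uniting a proper member with a member overlapping it gives a longer member; when the union
   is the whole range, the two overlapping members split [0..r-1] at two different places. *)
Lemma full_two_splits : exists p q, [/\ p < q < r.-1,
  F 0 p, F p.+1 r.-1, F 0 q & F q.+1 r.-1].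
Proof.
suff: forall d p q, r - (q - p) = d -> p < q -> q < r -> ~ (p = 0 /\ q = r.-1) ->
    F p q -> exists p q, [/\ p < q < r.-1, F 0 p, F p.+1 r.-1, F 0 q & F q.+1 r.-1].
  by move=> H; case: F_proper => p [q [pq qr nfull Fpq]]; exact: H erefl pq qr nfull Fpq.
elim/ltn_ind => d IH p q Ed pq qr nfull Fpq.
have [k [l [kl lr Fkl [[h1 [h2 h3]]|[h1 [h2 h3]]]]]] := F_overlapped pq qr nfull Fpq.
- have [Fkq Fpk Fql Fpl] := F_overlap h1 h2 h3 lr Fpq Fkl.
  have [[ep el]|nf] : (p = 0 /\ l = r.-1) \/ ~ (p = 0 /\ l = r.-1) by lia.
  + exists k.-1, q; rewrite ep el prednK in Fpk Fkl Fql *; last by lia.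
    by split; rewrite // -?ep; lia.
  + by apply: (IH _ _ p l erefl) => //; lia.
- have [Fpl Fkp Flq Fkq] := F_overlap h1 h2 h3 qr Fkl Fpq.
  have [[ek eq]|nf] : (k = 0 /\ q = r.-1) \/ ~ (k = 0 /\ q = r.-1) by lia.
  + exists p.-1, l; rewrite ek eq prednK in Fkp Fpq Fkl Flq *; last by lia.
    by split; rewrite // -?eq; lia.
  + by apply: (IH _ _ k q erefl) => //; lia.
Qed.

(* [a..b] is a shortest member of [F] containing both i and i+1.  Any other way of splitting
   it into two members would leave a shorter one containing i and i+1. *)
Section Shortest.
Variables (i a b : nat).
Hypotheses (Fab : F a b) (ai : a <= i) (ib : i < b) (br : b < r).
Hypothesis ab_shortest : forall a' b', a' <= i -> i < b' -> b' < r -> F a' b' ->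
  b - a <= b' - a'.

Lemma shortest_split_at p : a <= p -> p < b -> F a p -> F p.+1 b -> p = i.
Proof.
move=> ap pb Fap Fpb; have [lt|gt|//] := ltngtP p i.
- by have := ab_shortest lt ib br Fpb; lia.
- by have := ab_shortest ai gt (ltn_trans pb br) Fap; lia.
Qed.

Lemma shortest_not_full : ~ (a = 0 /\ b = r.-1).
Proof.
case=> ea eb; have [p [q [/andP [pq qr] F0p Fpr F0q Fqr]]] := full_two_splits.
have ep : p = i by apply: shortest_split_at; rewrite ?ea ?eb //; lia.
have eq : q = i by apply: shortest_split_at; rewrite ?ea ?eb //; lia.
lia.
Qed.

Lemma shortest_split : F a i /\ F i.+1 b.
Proof.
have [k [l [kl lr Fkl [[h1 [h2 h3]]|[h1 [h2 h3]]]]]] :=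
  F_overlapped (leq_ltn_trans ai ib) br shortest_not_full Fab.
- have [Fkb Fak _ _] := F_overlap h1 h2 h3 lr Fab Fkl.
  have ek : k.-1 = i by apply: shortest_split_at; rewrite ?prednK //; lia.
  by rewrite -ek prednK; [split | lia].
- have [Fal _ Flb _] := F_overlap h1 h2 h3 br Fkl Fab.
  by have <- : l = i by apply: shortest_split_at => //; lia.
Qed.

Lemma shortest_left : a = i.
Proof.
have [//|ai'] := eqVneq a i; have [Fai _] := shortest_split.
have nfull : ~ (a = 0 /\ i = r.-1) by lia.
have [u [w [uw wr Fuw [[h1 [h2 h3]]|[h1 [h2 h3]]]]]] :=
  F_overlapped (i := a) (j := i) ltac:(lia) ltac:(lia) nfull Fai.
- have [wb|bw] := leqP w b; first by have := ab_shortest h2 h3 wr Fuw; lia.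
  have [Fub Fau _ _] := F_overlap h1 (leq_trans h2 (ltnW ib)) bw wr Fab Fuw.
  have := @shortest_split_at u.-1; rewrite prednK; last by lia.
  by move=> /(_ _ _ Fau Fub); lia.
- have [Faw _ Fwb _] := F_overlap h1 h2 (ltn_trans h3 ib) br Fuw Fab.
  by have := shortest_split_at h2 (ltn_trans h3 ib) Faw Fwb; lia.
Qed.

Lemma shortest_right : b = i.+1.
Proof.
have [//|bi] := eqVneq b i.+1; have [_ Fib] := shortest_split.
have nfull : ~ (i.+1 = 0 /\ b = r.-1) by lia.
have [u [w [uw wr Fuw [[h1 [h2 h3]]|[h1 [h2 h3]]]]]] :=
  F_overlapped (i := i.+1) (j := b) ltac:(lia) br nfull Fib.
- have [Fub Fau _ _] := F_overlap (leq_ltn_trans ai (ltnW h1)) h2 h3 wr Fab Fuw.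
  have := @shortest_split_at u.-1; rewrite prednK; last by lia.
  by move=> /(_ _ _ Fau Fub); lia.
- have [au|ua] := leqP a u; first by have := ab_shortest (a' := u) ltac:(lia) h2 wr Fuw; lia.
  have [Faw _ Fwb _] := F_overlap ua (leq_trans ai (ltnW h2)) h3 br Fuw Fab.
  by have := shortest_split_at (leq_trans ai (ltnW h2)) h3 Faw Fwb; lia.
Qed.

End Shortest.

Lemma F_pair i : i.+1 < r -> F i i.+1.
Proof.
move=> ir; have r0 : 0 < r by lia.
pose fits d := [exists a : 'I_r, [&& a <= i, i < a + d, a + d < r & F a (a + d)]].
have fits_full : fits r.-1.
  by apply/existsP; exists (Ordinal r0); rewrite /= add0n F_full; apply/and3P; split; lia.
have [d /existsP [a /and4P [ai ib br Fab]] dmin] := ex_minnP (ex_intro fits _ fits_full).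
have shortest a' b' : a' <= i -> i < b' -> b' < r -> F a' b' -> a + d - a <= b' - a'.
  move=> h1 h2 h3 h4; rewrite addKn; apply: dmin; apply/existsP.
  by exists (Ordinal (leq_ltn_trans h1 (ltn_trans h2 h3))); rewrite /= subnKC ?h1 ?h2 ?h3 //; lia.
by rewrite -{1}(shortest_left Fab ai ib br shortest) -(shortest_right Fab ai ib br shortest).
Qed.

Lemma F_all i j : i <= j -> j < r -> F i j.
Proof.
move=> ij; rewrite -(subnKC ij); elim: (j - i) => [|[|d] IH] jr.
- by rewrite addn0 in jr *; apply: F_single.
- by rewrite addn1 in jr *; apply: F_pair.
- have Fp : F (i + d.+1) (i + d.+2) by rewrite [i + d.+2]addnS; apply: F_pair; rewrite -addnS.
  have [_ _ _ //] := F_overlap (i := i) (j := i + d.+1) (k := i + d.+1) (l := i + d.+2)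
    ltac:(lia) (leqnn _) ltac:(lia) jr (IH ltac:(lia)) Fp.
Qed.

End IntervalFamily.

Section Consecutive.
Variables (n : nat) (s : {perm 'I_n}).
Local Notation pos x := ((s^-1)%g x).

Lemma mem_consec S x y z : consec s S -> x \in S -> y \in S ->
  (pos x <= pos z)%N -> (pos z <= pos y)%N -> z \in S.
Proof.
case/andP=> _ /forall_inP H xS yS h1 h2.
by move: (H x xS) => /forall_inP /(_ y yS) /forallP /(_ z) /implyP; apply; rewrite h1 h2.
Qed.

Lemma consec_intro S : S != set0 ->
  (forall x y z, x \in S -> y \in S -> (pos x <= pos z)%N -> (pos z <= pos y)%N -> z \in S) ->
  consec s S.
Proof.
move=> ne H; apply/andP; split => //.
apply/forall_inP => x xS; apply/forall_inP => y yS; apply/forallP => z.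
by apply/implyP => /andP [h1 h2]; apply: (H x y).
Qed.

Lemma consec_neq0 S : consec s S -> S != set0.
Proof. by case/andP. Qed.

Lemma consecI A B : consec s A -> consec s B -> A :&: B != set0 -> consec s (A :&: B).
Proof.
move=> cA cB ne; apply: consec_intro => // x y z.
rewrite !inE => /andP[xA xB] /andP[yA yB] h1 h2.
by rewrite (mem_consec cA xA yA h1 h2) (mem_consec cB xB yB h1 h2).
Qed.

Lemma consecU A B : consec s A -> consec s B -> A :&: B != set0 -> consec s (A :|: B).
Proof.
move=> cA cB /set0Pn [w /setIP [wA wB]].
have mixed C D x y z : consec s C -> consec s D -> w \in C -> w \in D -> x \in C -> y \in D ->
    (pos x <= pos z)%N -> (pos z <= pos y)%N -> z \in C :|: D.
  move=> cC cD wC wD xC yD h1 h2; rewrite inE.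
  have [hz|hz] := leqP (pos z) (pos w); first by rewrite (mem_consec cC xC wC h1 hz).
  by rewrite (mem_consec cD wD yD (ltnW hz) h2) orbT.
apply: consec_intro; first by apply/set0Pn; exists w; rewrite inE wA.
move=> x y z /setUP [xA|xB] /setUP [yA|yB] h1 h2.
- by rewrite inE (mem_consec cA xA yA h1 h2).
- exact: mixed h1 h2.
- by rewrite setUC; apply: mixed h1 h2.
- by rewrite inE (mem_consec cB xB yB h1 h2) orbT.
Qed.

Lemma consecD A B : consec s A -> consec s B ->
  ~~ (A \subset B) -> ~~ (B \subset A) -> consec s (A :\: B).
Proof.
move=> cA cB nAB nBA; apply: consec_intro.
  by apply: contraNneq nAB => /eqP; rewrite setD_eq0.
case/subsetPn: nBA => v vB vA x y z /setDP [xA xB] /setDP [yA yB] h1 h2.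
rewrite inE (mem_consec cA xA yA h1 h2) andbT; apply/negP => zB.
have [vx|xv] := leqP (pos v) (pos x); first by rewrite (mem_consec cB vB zB vx h1) in xB.
have [yv|vy] := leqP (pos y) (pos v); first by rewrite (mem_consec cB zB vB h2 yv) in yB.
by rewrite (mem_consec cA xA yA (ltnW xv) (ltnW vy)) in vA.
Qed.

End Consecutive.

Lemma set_min_max n (S : {set 'I_n}) : S != set0 ->
  exists i j : 'I_n, [/\ i \in S, j \in S, (forall x, x \in S -> i <= x) &
     (forall x, x \in S -> x <= j)].
Proof.
case/set0Pn=> w wS.
case: (@arg_minnP _ w (mem S) val wS) => i iS imin.
case: (@arg_maxnP _ w (mem S) val wS) => j jS jmax.
by exists i, j.
Qed.

Lemma nth_take_drop T (x0 : T) s a m t : t < size (take m (drop a s)) ->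
  nth x0 (take m (drop a s)) t = nth x0 s (a + t).
Proof. by move=> ts; rewrite nth_take ?nth_drop //; move: ts; rewrite size_take_min; lia. Qed.

Section CommonIntervals.
Variables (n K : nat) (P : 'I_K -> {perm 'I_n}).
Hypothesis hK : 0 < K.
Hypothesis hP1 : forall k : 'I_K, val k = 0 -> P k = 1%g.

Definition precedes (Y Z : {set 'I_n}) : bool :=
  [&& Y != set0, Z != set0 & [forall y in Y, forall z in Z, y < z]].

Lemma adj_precedes : subrel (@adj n) precedes.
Proof.
move=> Y Z /existsP [y /andP [yY /existsP [z /andP [zZ]]]].
case/and3P => /eqP yz /forall_inP hY /forall_inP hZ.
apply/and3P; split; try by apply/set0Pn; eexists; eauto.
apply/forall_inP => y' y'Y; apply/forall_inP => z' z'Z.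
have {}yz : (y : nat).+1 = z by [].
by move: (hY y' y'Y) (hZ z' z'Z); lia.
Qed.

Lemma precedes_trans : transitive precedes.
Proof.
move=> M A C /and3P [nA /set0Pn [m mM] /forall_inP AM] /and3P [_ nC /forall_inP MC].
apply/and3P; split => //; apply/forall_inP => a aA; apply/forall_inP => c cC.
by apply: (@ltn_trans m); [move/forall_inP: (AM a aA); apply | move/forall_inP: (MC m mM); apply].
Qed.

Lemma precedes_irr : irreflexive precedes.
Proof.
move=> Y; apply/negP => /and3P [/set0Pn [y yY] _ /forall_inP /(_ y yY) /forall_inP /(_ y yY)].
by rewrite ltnn.
Qed.

Lemma sorted_adj_precedes s : sorted (@adj n) s -> sorted precedes s.
Proof. exact/sub_sorted/adj_precedes. Qed.

Lemma sorted_adj_uniq s : sorted (@adj n) s -> uniq s.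
Proof. by move/sorted_adj_precedes/(sorted_uniq precedes_trans precedes_irr). Qed.

Lemma sorted_adj_lt s i j (y z : 'I_n) : sorted (@adj n) s -> i < j -> j < size s ->
  y \in nth set0 s i -> z \in nth set0 s j -> y < z.
Proof.
move/sorted_adj_precedes; rewrite sorted_pairwise; last exact: precedes_trans.
move/(pairwiseP set0) => H ij js yi zj.
have /and3P [_ _ /forall_inP /(_ y yi) /forall_inP] : precedes (nth set0 s i) (nth set0 s j).
  by apply: H => //; rewrite inE; lia.
exact.
Qed.

Lemma common_consec S k : common P S -> consec (P k) S.
Proof. by move/forallP. Qed.

Lemma common_neq0 S : common P S -> S != set0.
Proof. by move/(common_consec (Ordinal hK))/consec_neq0. Qed.

Lemma mem_common S (x y z : 'I_n) : common P S -> x \in S -> y \in S ->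
  x <= z -> z <= y -> z \in S.
Proof.
move/(common_consec (Ordinal hK)); rewrite hP1 // => cS xS yS h1 h2.
by apply: (mem_consec cS xS yS); rewrite invg1 !perm1.
Qed.

Lemma commonI A B : common P A -> common P B -> A :&: B != set0 -> common P (A :&: B).
Proof. by move=> cA cB ne; apply/forallP => k; apply: consecI; rewrite ?common_consec. Qed.

Lemma commonU A B : common P A -> common P B -> A :&: B != set0 -> common P (A :|: B).
Proof. by move=> cA cB ne; apply/forallP => k; apply: consecU; rewrite ?common_consec. Qed.

Lemma commonD A B : common P A -> common P B -> ~~ (A \subset B) -> ~~ (B \subset A) ->
  common P (A :\: B).
Proof. by move=> cA cB h1 h2; apply/forallP => k; apply: consecD; rewrite ?common_consec. Qed.

Lemma common_itv S : common P S -> exists i j : 'I_n, S = itv n i j.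
Proof.
move=> cS; have [i [j [iS jS imin jmax]]] := set_min_max (common_neq0 cS).
exists i, j; apply/setP => x; rewrite inE; apply/idP/idP => [xS|/andP [h1 h2]].
- by rewrite imin // jmax.
- exact: (mem_common cS iS jS).
Qed.

Lemma common_overlap S T : common P S -> common P T -> S :&: T != set0 ->
  ~~ (S \subset T) -> ~~ (T \subset S) -> overlap S T.
Proof.
move=> cS cT /set0Pn [x /setIP [xS xT]] /subsetPn [y yS yT] /subsetPn [z zT zS].
have [i [j eS]] := common_itv cS; have [k [l eT]] := common_itv cT.
move: xS xT yS yT zS zT; rewrite eS eT !inE => xS xT yS yT zS zT.
apply/existsP; exists i; apply/existsP; exists j; apply/existsP; exists k.
by apply/existsP; exists l; rewrite !eqxx /=; lia.
Qed.

Lemma overlap_crossing (S T : {set 'I_n}) : overlap S T ->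
  [/\ S :&: T != set0, ~~ (S \subset T) & ~~ (T \subset S)].
Proof.
case/existsP => i /existsP [j /existsP [k /existsP [l /andP [/andP [/eqP -> /eqP ->]]]]].
case/orP => /andP [/andP [h1 h2] h3].
- split; [apply/set0Pn; exists k | apply/subsetPn; exists i | apply/subsetPn; exists l];
    by rewrite !inE; lia.
- split; [apply/set0Pn; exists i | apply/subsetPn; exists j | apply/subsetPn; exists k];
    by rewrite !inE; lia.
Qed.

Lemma strong_common S : strong P S -> common P S.
Proof. by case/andP. Qed.

Lemma strong_laminar S T : strong P S -> common P T -> S :&: T != set0 ->
  (S \subset T) \/ (T \subset S).
Proof.
case/andP => cS /forallP /(_ T) /implyP noverlap cT ne.
have [|nST] := boolP (S \subset T); first by left.
have [|nTS] := boolP (T \subset S); first by right.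
by move: (noverlap cT); rewrite common_overlap.
Qed.

Lemma strong_set1 (x : 'I_n) : strong P [set x].
Proof.
apply/andP; split.
  apply/forallP => k; apply: consec_intro; first by apply/set0Pn; exists x; rewrite inE.
  move=> y z w; rewrite !inE => /eqP -> /eqP -> h1 h2.
  by apply/eqP/(@perm_inj _ ((P k)^-1)%g)/val_inj/eqP; rewrite eqn_leq h1 h2.
apply/forallP => T; apply/implyP => _.
apply/negP => /existsP [i /existsP [j /existsP [k /existsP [l /andP [/andP [/eqP E _] H]]]]].
have : x \in itv n i j by rewrite -E set11.
rewrite inE => /andP [xi xj].
have : i \in itv n i j by rewrite inE leqnn; exact: leq_trans xj.
have : j \in itv n i j by rewrite inE leqnn andbT; exact: leq_trans xj.
by rewrite -E !inE => /eqP ej /eqP ei; move: H; rewrite ei ej; lia.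
Qed.

Lemma nested_common b S : nested P b S -> common P S.
Proof. by case. Qed.

Lemma childP X Y : is_child P X Y ->
  [/\ strong P X, strong P Y, Y \proper X &
      forall Z, strong P Z -> Y \proper Z -> X \subset Z].
Proof.
case/andP => /andP [/andP [sX sY] pYX] /forallP H; split => // Z sZ pYZ.
by move/implyP: (H Z); apply; rewrite sZ pYZ.
Qed.

Lemma child_neq0 X Y : is_child P X Y -> Y != set0.
Proof. by case/childP => _ /strong_common/common_neq0. Qed.

Lemma child_sub X Y : is_child P X Y -> Y \subset X.
Proof. by case/childP => _ _ /proper_sub. Qed.

Lemma child_eq X Y1 Y2 : is_child P X Y1 -> is_child P X Y2 -> Y1 :&: Y2 != set0 -> Y1 = Y2.
Proof.
have sub_eq A B : is_child P X A -> is_child P X B -> A \subset B -> A = B.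
  move=> cA cB AB; have [_ _ _ minA] := childP cA; have [_ sB pBX _] := childP cB.
  apply/eqP; rewrite eqEsubset AB /=; apply: contraT => nBA.
  have pAB : A \proper B by rewrite properE AB nBA.
  by move: pBX; rewrite properE (minA B sB pAB) andbF.
move=> c1 c2 ne; have [_ s1 _ _] := childP c1; have [_ s2 _ _] := childP c2.
case: (strong_laminar s1 (strong_common s2) ne) => h; first exact: sub_eq.
exact/esym/sub_eq.
Qed.

(* The child containing x is a largest strong interval containing x and properly inside X. *)
Lemma child_cover X (x : 'I_n) : children P X != set0 -> x \in X ->
  exists Y, is_child P X Y /\ x \in Y.
Proof.
case/set0Pn => C; rewrite inE => cC xX; have [sX _ pCX _] := childP cC.
have pxX : [set x] \proper X.
  rewrite properEcard sub1set xX cards1 /=.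
  by apply: leq_ltn_trans (proper_card pCX); rewrite card_gt0 (child_neq0 cC).
have P0 : strong P [set x] && (x \in [set x]) && ([set x] \proper X).
  by rewrite strong_set1 set11 pxX.
have [M /andP [/andP [sM xM] pMX] Mmax] :=
  @arg_maxnP _ [set x] (fun S => strong P S && (x \in S) && (S \proper X)) (fun S => #|S|) P0.
exists M; split => //; apply/andP; split; first by rewrite sX sM pMX.
apply/forallP => Z; apply/implyP => /andP [sZ pMZ].
have ne : X :&: Z != set0 by apply/set0Pn; exists x; rewrite inE xX (subsetP (proper_sub pMZ)).
case: (strong_laminar sX (strong_common sZ) ne) => // ZX.
have [-> //|nZX] := eqVneq Z X.
have : #|Z| <= #|M| by apply: Mmax; rewrite sZ properEneq nZX ZX (subsetP (proper_sub pMZ)).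
by rewrite leqNgt proper_card.
Qed.

Lemma nested_inv b (A : {set 'I_n}) : nested P b A ->
  #|A| = 1 \/ exists2 J : {set 'I_n}, J \proper A & #|A| <= #|J| + b /\ nested P b J.
Proof. by case=> [A' _ A1|A' J _ _ pJ card nJ]; [left | right; exists J]. Qed.

Lemma nested_superset b (A J : {set 'I_n}) : common P A -> J \subset A ->
  #|A| <= #|J| + b -> nested P b J -> nested P b A.
Proof.
move=> cA JA card nJ; have [<- //|nJA] := eqVneq J A.
by apply: nestedS cA (nested_common nJ) _ card nJ; rewrite properEneq nJA.
Qed.

Lemma nested_setD_small b (A B : {set 'I_n}) : common P A -> small b B ->
  nested P b (A :\: B) -> nested P b A.
Proof.
move=> cA sB nAB; apply: nested_superset cA (subsetDl A B) _ nAB.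
by rewrite -(cardsID B A) addnC leq_add2l (leq_trans (subset_leq_card (subsetIr A B))).
Qed.

Lemma nested_peel b (A B J : {set 'I_n}) : common P (A :\: B) -> B \subset A ->
  J \subset A -> J :&: B = set0 -> #|A| <= #|J| + b -> nested P b J ->
  small b B /\ nested P b (A :\: B).
Proof.
move=> cAB BA JA JB card nJ.
have JAB : J \subset A :\: B by rewrite subsetD JA /= -setI_eq0 JB.
have cardA : #|A| = #|B| + #|A :\: B| by rewrite -(cardsID B A) (setIidPr BA).
split; first by move: (subset_leq_card JAB); rewrite /small; lia.
by apply: (nested_superset cAB JAB) nJ; lia.
Qed.

Section QNode.
Variables (X : {set 'I_n}) (cs : seq {set 'I_n}).
Hypothesis hQ : Qnode P X.
Hypothesis hsort : sorted (@adj n) cs.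
Hypothesis hmem : forall Y, (Y \in cs) = is_child P X Y.

Local Notation r := (size cs).
Local Notation ch m := (nth set0 cs m).

Lemma Qnode_strong : strong P X.
Proof. by case/andP: hQ. Qed.

Lemma card_children : #|children P X| = r.
Proof.
rewrite -(card_uniqP (sorted_adj_uniq hsort)); apply: eq_card => Y.
by rewrite inE hmem.
Qed.

Lemma Qnode_union : some_union_common P X.
Proof. by case/andP: hQ. Qed.

Lemma Qnode_size : 2 < r.
Proof.
case/existsP: Qnode_union => D' /and4P [_ h2 h3 _].
by rewrite -card_children; exact: leq_ltn_trans h2 h3.
Qed.

Lemma ch_child m : m < r -> is_child P X (ch m).
Proof. by move=> mr; rewrite -hmem mem_nth. Qed.

Lemma ch_neq0 m : m < r -> ch m != set0.
Proof. by move/ch_child/child_neq0. Qed.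

Lemma ch_sub m : m < r -> ch m \subset X.
Proof. by move/ch_child/child_sub. Qed.

Lemma ch_strong m : m < r -> strong P (ch m).
Proof. by case/ch_child/childP. Qed.

Definition idx (y : 'I_n) : nat := find (fun Y : {set 'I_n} => y \in Y) cs.

Lemma idx_lt y : y \in X -> idx y < r.
Proof.
move=> yX; have [|Y [cY yY]] := child_cover _ yX.
  by apply/set0Pn; exists (ch 0); rewrite inE ch_child // ltnW // ltnW // Qnode_size.
by rewrite /idx -has_find; apply/hasP; exists Y; rewrite ?hmem.
Qed.

Lemma mem_ch_idx y : y \in X -> y \in ch (idx y).
Proof. by move/idx_lt; rewrite /idx -has_find; apply: nth_find. Qed.

Lemma idx_ch y m : m < r -> y \in ch m -> idx y = m.
Proof.
move=> mr ym; have yX := subsetP (ch_sub mr) _ ym; have yr := idx_lt yX.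
have : ch (idx y) = ch m.
  apply: (child_eq (ch_child yr) (ch_child mr)).
  by apply/set0Pn; exists y; rewrite inE mem_ch_idx.
by move/eqP; rewrite nth_uniq ?(sorted_adj_uniq hsort) // => /eqP.
Qed.

Lemma idx_mono y z : y \in X -> z \in X -> idx y < idx z -> y < z.
Proof.
move=> yX zX lt; apply: (sorted_adj_lt hsort lt (idx_lt zX)); exact: mem_ch_idx.
Qed.

Lemma idx_le (y z : 'I_n) : y \in X -> z \in X -> y <= z -> idx y <= idx z.
Proof. by move=> yX zX yz; rewrite leqNgt; apply/negP => /(idx_mono zX yX); lia. Qed.

Definition run i j : {set 'I_n} := [set y in X | i <= idx y <= j].

Lemma mem_run i j y : (y \in run i j) = [&& y \in X, i <= idx y & idx y <= j].
Proof. by rewrite inE. Qed.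

Lemma run_sub i j : run i j \subset X.
Proof. by apply/subsetP => y; rewrite mem_run => /andP []. Qed.

Lemma mem_run_ch m i j y : m < r -> y \in ch m -> (y \in run i j) = (i <= m <= j).
Proof. by move=> mr ym; rewrite mem_run (idx_ch mr ym) (subsetP (ch_sub mr)). Qed.

Lemma run1 i : i < r -> run i i = ch i.
Proof.
move=> ir; apply/setP => y; apply/idP/idP => [|yC]; last by rewrite (mem_run_ch _ _ ir yC) leqnn.
rewrite mem_run => /and3P [yX h1 h2]; have <- : idx y = i by lia.
exact: mem_ch_idx.
Qed.

Lemma run_all : run 0 r.-1 = X.
Proof.
apply/setP => y; rewrite mem_run; apply/idP/idP => [/andP [] //|yX].
by rewrite yX /=; move: (idx_lt yX); lia.
Qed.

Lemma subset_run i j k l : i <= j -> j < r ->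
  (run i j \subset run k l) = (k <= i) && (j <= l).
Proof.
move=> ij jr; have ir := leq_ltn_trans ij jr; apply/idP/idP => [/subsetP sub|/andP [ki jl]].
- have /set0Pn [y yi] := ch_neq0 ir; have /set0Pn [z zj] := ch_neq0 jr.
  move: (sub y) (sub z); rewrite !(mem_run_ch _ _ ir yi) !(mem_run_ch _ _ jr zj) !leqnn ij.
  by move=> /(_ isT) /andP [-> _] /(_ isT) /andP [_ ->].
- by apply/subsetP => y; rewrite !mem_run => /and3P [-> h1 h2]; apply/andP; split; lia.
Qed.

Lemma run_meet i j k l : i <= j -> j < r -> k <= l -> l < r ->
  (run i j :&: run k l != set0) = (k <= j) && (i <= l).
Proof.
move=> ij jr kl lr; apply/idP/idP => [/set0Pn [y]|/andP [kj il]].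
- by rewrite inE !mem_run => /andP [/and3P [_ h1 h2] /and3P [_ h3 h4]]; apply/andP; split; lia.
- have mr : maxn i k < r by lia.
  have /set0Pn [y yC] := ch_neq0 mr.
  by apply/set0Pn; exists y; rewrite inE !(mem_run_ch _ _ mr yC); apply/andP; split; lia.
Qed.

Lemma run_subset_common T i j : common P T -> i <= j -> j < r ->
  ch i \subset T -> ch j \subset T -> run i j \subset T.
Proof.
move=> cT ij jr /subsetP iT /subsetP jT; have ir := leq_ltn_trans ij jr.
have /set0Pn [yi yiC] := ch_neq0 ir; have /set0Pn [yj yjC] := ch_neq0 jr.
apply/subsetP => y; rewrite mem_run => /and3P [yX h1 h2].
have [ei|ni] := eqVneq (idx y) i; first by apply: iT; rewrite -ei mem_ch_idx.
have [ej|nj] := eqVneq (idx y) j; first by apply: jT; rewrite -ej mem_ch_idx.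
apply: (mem_common cT (iT _ yiC) (jT _ yjC)); apply: ltnW.
- by apply: (idx_mono (subsetP (ch_sub ir) _ yiC) yX); rewrite (idx_ch ir yiC); lia.
- by apply: (idx_mono yX (subsetP (ch_sub jr) _ yjC)); rewrite (idx_ch jr yjC); lia.
Qed.

Lemma common_run T : common P T -> T \subset X ->
  (forall m, m < r -> ch m :&: T != set0 -> ch m \subset T) ->
  exists k l, [/\ k <= l, l < r & T = run k l].
Proof.
move=> cT /subsetP TX H.
have [i [j [iT jT imin jmax]]] := set_min_max (common_neq0 cT).
have ir := idx_lt (TX _ iT); have jr := idx_lt (TX _ jT).
have ij : idx i <= idx j by apply: idx_le; rewrite ?TX ?imin.
exists (idx i), (idx j); split => //; apply/eqP; rewrite eqEsubset; apply/andP; split.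
- apply/subsetP => y yT; have yX := TX _ yT.
  by rewrite mem_run yX !idx_le ?TX ?imin ?jmax.
- apply: run_subset_common => //; apply: H => //; apply/set0Pn.
  + by exists i; rewrite inE mem_ch_idx ?TX.
  + by exists j; rewrite inE mem_ch_idx ?TX.
Qed.

Lemma run_crossing i j k l : i < k -> k <= j -> j < l ->
  [/\ run i j :&: run k l = run k j, run i j :\: run k l = run i k.-1,
      run k l :\: run i j = run j.+1 l & run i j :|: run k l = run i l].
Proof.
by move=> ik kj jl; split; apply/setP => y; rewrite !inE; case: (y \in X) => //=;
  apply/idP/idP; lia.
Qed.

Lemma common_run_crossing i j k l : i < k -> k <= j -> j < l -> l < r ->
  common P (run i j) -> common P (run k l) ->
  [/\ common P (run k j), common P (run i k.-1), common P (run j.+1 l) & common P (run i l)].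
Proof.
move=> ik kj jl lr cij ckl; have [<- <- <- <-] := run_crossing ik kj jl.
have meet : run i j :&: run k l != set0 by rewrite run_meet //; lia.
have nij : ~~ (run i j \subset run k l) by rewrite subset_run //; lia.
have nkl : ~~ (run k l \subset run i j) by rewrite subset_run //; lia.
by split; [apply: commonI | apply: commonD | apply: commonD | apply: commonU].
Qed.

(* A strong proper run would sit strictly between the child [ch i] and its parent X.  The
   common interval it overlaps cannot cut a child, since children are strong, so it is a run. *)
Lemma common_run_overlapped i j : i < j -> j < r -> ~ (i = 0 /\ j = r.-1) ->
  common P (run i j) ->
  exists k l, [/\ k <= l, l < r, common P (run k l) &
     ((i < k /\ k <= j /\ j < l) \/ (k < i /\ i <= l /\ l < j))].
Proof.
move=> ij jr nfull cij; have ir := ltn_trans ij jr; have ij' := ltnW ij.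
have nstrong : ~~ strong P (run i j).
  apply/negP => sij; have [_ _ _ minimal] := childP (ch_child ir).
  have pij : ch i \proper run i j by rewrite -(run1 ir) properE !subset_run //; lia.
  have r0 : r.-1 < r by move: Qnode_size; lia.
  by move: (minimal _ sij pij); rewrite -{1}run_all subset_run //; lia.
move: nstrong; rewrite /strong cij => /forallPn [T]; rewrite negb_imply negbK => /andP [cT ov].
have [meet nijT nTij] := overlap_crossing ov.
have TX : T \subset X.
  have meetX : X :&: T != set0.
    case/set0Pn: meet => y /setIP [yij yT].
    by apply/set0Pn; exists y; rewrite inE yT (subsetP (run_sub i j)).
  case: (strong_laminar Qnode_strong cT meetX) => // XT.
  by rewrite (subset_trans (run_sub i j) XT) in nijT.
have inT m : m < r -> ch m :&: T != set0 -> ch m \subset T.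
  move=> mr mT; case: (strong_laminar (ch_strong mr) cT mT) => // Tm.
  have [im|nim] := boolP (i <= m <= j).
  - by rewrite (subset_trans Tm) // -(run1 mr) subset_run in nTij.
  - case/set0Pn: meet => y /setIP [yij yT].
    by move: yij; rewrite (mem_run_ch _ _ mr (subsetP Tm _ yT)) (negbTE nim).
have [k [l [kl lr eT]]] := common_run cT TX inT.
move: meet nijT nTij; rewrite eT run_meet // !subset_run // => meet nijT nTij.
by exists k, l; split; rewrite -?eT //; lia.
Qed.

Lemma common_run_proper : exists i j,
  [/\ i < j, j < r, ~ (i = 0 /\ j = r.-1) & common P (run i j)].
Proof.
case/existsP: Qnode_union => D /and4P [sD D2 Dr cU].
set U := \bigcup_(Y in D) Y in cU.
have chD Y : Y \in D -> is_child P X Y by move/(subsetP sD); rewrite inE.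
have UX : U \subset X by apply/bigcupsP => Y /chD /child_sub.
have inU m : m < r -> ch m :&: U != set0 -> ch m \subset U.
  move=> mr /set0Pn [y /setIP [ym /bigcupP [Y YD yY]]].
  have -> : ch m = Y.
    by apply: child_eq (ch_child mr) (chD Y YD) _; apply/set0Pn; exists y; rewrite inE ym.
  exact: bigcup_sup.
have [k [l [kl lr eU]]] := common_run cU UX inU.
exists k, l; split; rewrite -?eU //.
- rewrite ltn_neqAle kl andbT; apply: contraTneq D2 => ekl; rewrite -ltnNge ltnS.
  rewrite -(cards1 (ch k)); apply/subset_leq_card/subsetP => Y YD; rewrite inE.
  have /set0Pn [y yY] := child_neq0 (chD Y YD).
  have : y \in U := subsetP (bigcup_sup _ YD) _ yY.
  rewrite eU -ekl run1 ?ekl // => yk.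
  apply/eqP; apply: (child_eq (chD Y YD) (ch_child lr)).
  by apply/set0Pn; exists y; rewrite inE yY.
- move=> [ek el]; suff /subset_leq_card : children P X \subset D by rewrite leqNgt Dr.
  apply/subsetP => Y; rewrite inE => cY; have /set0Pn [y yY] := child_neq0 cY.
  have : y \in U by rewrite eU ek el run_all (subsetP (child_sub cY)).
  case/bigcupP => Y' Y'D yY'; rewrite (child_eq cY (chD Y' Y'D)) //.
  by apply/set0Pn; exists y; rewrite inE yY.
Qed.

Lemma common_run_all i j : i <= j -> j < r -> common P (run i j).
Proof.
apply: (@F_all r (fun i j => common P (run i j))).
- by move=> m mr; rewrite run1 // strong_common // ch_strong.
- by rewrite run_all strong_common // Qnode_strong.
- exact: common_run_crossing.
- exact: common_run_overlapped.
- exact: common_run_proper.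
Qed.

Lemma ch_disjoint m m' : m < r -> m' < r -> m != m' -> ch m :&: ch m' = set0.
Proof.
move=> mr m'r; apply: contraNeq => /(child_eq (ch_child mr) (ch_child m'r)) /eqP.
by rewrite nth_uniq // sorted_adj_uniq.
Qed.

Lemma ch_sub_common T m m' : m < r -> m' < r -> m != m' -> common P T ->
  ch m :&: T != set0 -> ch m' :&: T != set0 -> ch m \subset T.
Proof.
move=> mr m'r mm' cT meet meet'; case: (strong_laminar (ch_strong mr) cT meet) => // Tm.
case/set0Pn: meet' => y /setIP [ym' yT].
by have := ch_disjoint mr m'r mm'; move/setP/(_ y); rewrite !inE ym' (subsetP Tm).
Qed.

Lemma run_setD_first i j : i < r -> run i j :\: ch i = run i.+1 j.
Proof.
move=> ir; rewrite -(run1 ir); apply/setP => y; rewrite !inE.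
by case: (y \in X) => //=; apply/idP/idP; lia.
Qed.

Lemma run_setD_last i j : 0 < j -> j < r -> run i j :\: ch j = run i j.-1.
Proof.
move=> j0 jr; rewrite -(run1 jr); apply/setP => y; rewrite !inE.
by case: (y \in X) => //=; apply/idP/idP; lia.
Qed.

(* The interval J witnessing nestedness cannot meet both end children: it would then contain
   them, as they are strong, and hence the whole run. *)
Lemma nested_run b i j : i < j -> j < r ->
  (nested P b (run i j) <->
   ((small b (ch i) /\ nested P b (run i j :\: ch i)) \/
    (small b (ch j) /\ nested P b (run i j :\: ch j)))).
Proof.
move=> ij jr; have ir := ltn_trans ij jr; have nij : i != j by rewrite ltn_eqF.
have cij := common_run_all (ltnW ij) jr.
have chi : ch i \subset run i j by rewrite -(run1 ir) subset_run //; lia.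
have chj : ch j \subset run i j by rewrite -(run1 jr) subset_run //; lia.
split => [nested_ij|[[sB nB]|[sB nB]]]; try exact: nested_setD_small cij sB nB.
case: (nested_inv nested_ij) => [A1|[J pJA [card nJ]]].
  have : #|ch i :|: ch j| <= 1 by rewrite -A1 subset_leq_card // subUset chi chj.
  have := ch_neq0 ir; have := ch_neq0 jr; rewrite -!card_gt0 cardsU ch_disjoint // cards0.
  lia.
have JA := proper_sub pJA; have cJ := nested_common nJ.
have [Ji|Ji] := eqVneq (J :&: ch i) set0.
  by left; apply: nested_peel chi JA Ji card nJ; rewrite run_setD_first // common_run_all.
have [Jj|Jj] := eqVneq (J :&: ch j) set0.
  right; apply: nested_peel chj JA Jj card nJ.
  by rewrite run_setD_last ?common_run_all //; lia.
have iJ : ch i \subset J by apply: (ch_sub_common ir jr nij); rewrite // setIC.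
have jJ : ch j \subset J by apply: (ch_sub_common jr ir); rewrite 1?(eq_sym j) // setIC.
by move: pJA; rewrite properE (run_subset_common cJ (ltnW ij) jr iJ jJ) andbF.
Qed.

Lemma bigcup_segment a m (k := size (take m (drop a cs))) : 0 < k ->
  a + k <= r /\ \bigcup_(Y in [set Y in take m (drop a cs)]) Y = run a (a + k.-1).
Proof.
have ek : k = minn m (r - a) by rewrite /k size_take_min size_drop.
move=> k0; have ar : a + k <= r by move: k0; rewrite ek; lia.
split=> //; apply/setP => y; apply/bigcupP/idP => [[Y]|].
- rewrite inE => /(nthP set0) [t tk <-]; rewrite nth_take_drop // => yt.
  by rewrite (mem_run_ch _ _ _ yt); rewrite -/k in tk; lia.
- rewrite mem_run => /and3P [yX h1 h2]; have tk : idx y - a < k by lia.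
  exists (nth set0 (take m (drop a cs)) (idx y - a)); first by rewrite inE mem_nth.
  by rewrite nth_take_drop // subnKC // mem_ch_idx.
Qed.

End QNode.

Lemma Qinterval_strong I : Qinterval P I -> strong P I -> Qnode P I.
Proof. by case/andP => _; rewrite /Pinterval /Pnode /Qnode => /nandP [/negP //|/negPn ->] ->. Qed.

Lemma nested_children b I (xs : seq {set 'I_n}) : Qnode P I ->
  [set Y in xs] = children P I -> sorted (@adj n) xs ->
  (nested P b I <->
     ((small b (head set0 xs) /\ nested P b (I :\: head set0 xs)) \/
      (small b (last set0 xs) /\ nested P b (I :\: last set0 xs)))).
Proof.
move=> qI eD so.
have hmem Y : (Y \in xs) = is_child P I Y by move/setP: eD => /(_ Y); rewrite !inE.
have r2 := Qnode_size qI so hmem.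
rewrite -nth0 -nth_last -(run_all qI so hmem).
by apply: nested_run => //; lia.
Qed.

Lemma nested_segment b I (xs : seq {set 'I_n}) X cs a m : common P I -> ~~ strong P I ->
  Qnode P X -> sorted (@adj n) cs -> perm_eq cs (enum (children P X)) ->
  [set Y in xs] = [set Y in take m (drop a cs)] -> \bigcup_(Y in [set Y in xs]) Y = I ->
  sorted (@adj n) xs ->
  (nested P b I <->
     ((small b (head set0 xs) /\ nested P b (I :\: head set0 xs)) \/
      (small b (last set0 xs) /\ nested P b (I :\: last set0 xs)))).
Proof.
move=> cI nsI qX scs pcs eD eU so.
have hmem Y : (Y \in cs) = is_child P X Y by rewrite (perm_mem pcs) mem_enum inE.
set s := take m (drop a cs) in eD.
have ss : sorted precedes s.
  apply: (subseq_sorted precedes_trans _ (sorted_adj_precedes scs)).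
  exact: subseq_trans (take_subseq _ _) (drop_subseq _ _).
have exs : xs = s.
  apply: (irr_sorted_eq precedes_trans precedes_irr (sorted_adj_precedes so) ss) => Y.
  by move/setP: eD => /(_ Y); rewrite !inE.
rewrite exs in eU *; have k0 : 0 < size s.
  rewrite lt0n size_eq0; apply: contraNneq (common_neq0 cI) => s0.
  by rewrite -eU s0 big_set0.
have [ar eB] := bigcup_segment qX scs hmem k0; rewrite -/s in ar eB; rewrite {}eB in eU.
have k1 : 1 < size s.
  rewrite ltn_neqAle k0 andbT; apply: contraNneq nsI => k1.
  have ar' : a < size cs by lia.
  by rewrite -eU -k1 /= addn0 run1 // (ch_strong hmem).
rewrite -eU -nth0 -nth_last !nth_take_drop ?prednK // addn0.
by apply: nested_run => //; lia.
Qed.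

End CommonIntervals.

Theorem lemma3 (n : nat) (hn : 0 < n) (K : nat) (hK : 0 < K)
  (P : 'I_K -> {perm 'I_n}) (hP1 : forall k : 'I_K, val k = 0 -> P k = 1%g)
  (b : nat) (hb : 0 < b) (I : {set 'I_n}) (xs : seq {set 'I_n}) :
  Qinterval P I ->
  is_domain P I [set Y in xs] ->
  sorted (@adj n) xs ->
  (nested P b I <->
     ((small b (head set0 xs) /\ nested P b (I :\: head set0 xs)) \/
      (small b (last set0 xs) /\ nested P b (I :\: last set0 xs)))).
Proof.
move=> qI [[sI eD]|[nsI [X [qX [cs [scs [pcs [a [m [eD eU]]]]]]]]]] so.
- exact: nested_children (Qinterval_strong qI sI) eD so.
- by case/andP: qI => cI _; exact: nested_segment cI nsI qX scs pcs eD eU so.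
Qed.
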